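(* Let $n,T,K$ be positive integers. Let $P_1,\ldots,P_T$ be $n\times n$ matrices and let $\hat P_1,\ldots,\hat P_T$ be arbitrary $n\times n$ matrices (estimates of the $P_i$). Define the $T\times T$ matrices $D$ and $\hat D$ by $D_{ij}=\|P_i-P_j\|_F$ and $\hat D_{ij}=\|\hat P_i-\hat P_j\|_F$. Suppose $D$ has rank $K$. Let $V$ (resp. $\hat V$) be a $T\times K$ matrix whose columns are orthonormal eigenvectors of $D$ (resp. $\hat D$) corresponding to its $K$ eigenvalues of largest absolute value. Let $\gamma$ be the smallest absolute value among the $K$ nonzero eigenvalues of $D$ (equivalently, the $K$-th largest eigenvalue of $D$ in absolute value). Then there exists a $K\times K$ orthogonal matrix $\hat O$ such that \[ \|\hat V\hat O-V\|_F^2\le \frac{64T}{\gamma^2}\sum_{i=1}^T\|\hat P_i-P_i\|_F^2 . \]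
   Context: $\|\cdot\|_F$ denotes the Frobenius norm. In the intended application, $P_i$ is the link probability matrix of the $i$-th observed network on a common set of $n$ nodes (node correspondence present) and $\hat P_i$ is an estimate of it obtained from the observed adjacency matrix. *)

From mathcomp Require Import all_boot all_order all_algebra.
Set Implicit Arguments. Unset Strict Implicit. Unset Printing Implicit Defensive.
Import Order.TTheory GRing.Theory Num.Theory.
Local Open Scope ring_scope.

Definition frob (R : rcfType) (m n : nat) (A : 'M[R]_(m, n)) : R :=
  Num.sqrt (\sum_(i < m) \sum_(j < n) A i j ^+ 2).

Definition distmat (R : rcfType) (n T : nat) (P : 'I_T -> 'M[R]_n) : 'M[R]_T :=
  \matrix_(i, j) frob (P i - P j).

(* V has orthonormal columns which are eigenvectors of A with eigenvalues lam,
   and these are K eigenvalues of largest absolute value: every eigenvalue of an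
   eigenvector orthogonal to the columns of V has absolute value at most each |lam k|. *)
Definition top_abs_eigvecs (R : rcfType) (T K : nat) (A : 'M[R]_T)
    (V : 'M[R]_(T, K)) (lam : 'rV[R]_K) : Prop :=
  [/\ V^T *m V = 1%:M,
      A *m V = V *m diag_mx lam &
      forall (x : 'cV[R]_T) (mu : R),
        V^T *m x = 0 -> x != 0 -> A *m x = mu *: x ->
        forall k : 'I_K, `|mu| <= `|lam 0 k| ].

From mathcomp Require Import all_boot all_order all_algebra.
From mathcomp Require Import complex.
From mathcomp Require Import ring lra.
Import Order.TTheory GRing.Theory Num.Theory.
Local Open Scope ring_scope.
Set Implicit Arguments. Unset Strict Implicit. Unset Printing Implicit Defensive.

(* The entries of [E := distmat Ph - distmat P] are controlled by the reverse
   triangle inequality, so [||E||^2 <= 4 T \sum_i ||Ph_i - P_i||^2].  As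
   [distmat P] has rank [K], it vanishes on the orthogonal complement of [V].
   The eigenvectors of [distmat Ph] orthogonal to [Vh] are split according to
   whether their eigenvalue [mu] exceeds [gamma / 2] in modulus.  For small
   [mu] we have [|mu - lam k| >= gamma / 2], and a Sylvester equation bounds
   their components along [V] by [||E||].  The [s] large ones span, together
   with [Vh], a space of dimension [K + s] on which [distmat Ph] has
   eigenvalues above [gamma / 2] while [distmat P] has rank [K]; this costs
   [s gamma^2 / 4 <= ||E||^2].  Hence [gamma^2 ||(1 - Vh Vh^T) V||^2 <= 8 ||E||^2],
   and aligning the two frames through the polar decomposition of [Vh^T V]
   loses a factor 2.  Over a real closed field the spectral theorem is obtained
   by growing an orthonormal eigenbasis; a real eigenvector in each invariant
   subspace comes from a complex eigenvalue, which is real by symmetry. *)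

Lemma trmx_mul_colE (R : pzSemiRingType) m n p (A : 'M[R]_(m, n)) (B : 'M[R]_(m, p)) i k :
  (A^T *m B) i k = ((col i A)^T *m col k B) 0 0.
Proof. by rewrite !mxE; apply: eq_bigr => r _; rewrite !mxE. Qed.

Lemma col_mulmx (R : pzSemiRingType) m n p (A : 'M[R]_(m, n)) (B : 'M[R]_(n, p)) k :
  col k (A *m B) = A *m col k B.
Proof. by rewrite !colE mulmxA. Qed.

Lemma col_inj (R : Type) m n (A B : 'M[R]_(m, n)) : (forall i, col i A = col i B) -> A = B.
Proof. by move=> AB; apply/matrixP => r i; move/colP: (AB i) => /(_ r); rewrite !mxE. Qed.

Lemma col_mul_diag (R : comPzSemiRingType) m n (A : 'M[R]_(m, n)) (d : 'rV[R]_n) i :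
  col i (A *m diag_mx d) = d 0 i *: col i A.
Proof. by apply/colP => r; rewrite mul_mx_diag !mxE mulrC. Qed.

Lemma mxrank_col0 (F : fieldType) m n (W : 'M[F]_(m, n)) j : col j W = 0 -> (\rank W < n)%N.
Proof.
move=> Wj0; have ej : @submx F 1 n n (delta_mx 0 j) (kermx W^T).
  by rewrite sub_kermx -rowE -tr_col Wj0 trmx0.
by rewrite -mxrank_tr -subn_gt0 -mxrank_ker (leq_trans _ (mxrankS ej)) // mxrank_delta.
Qed.

Lemma stablemx_kermx_eigencols (F : fieldType) m n (A : 'M[F]_m) (W : 'M[F]_(m, n)) :
  (forall i, exists e, A *m col i W = e *: col i W) -> stablemx (kermx W) A.
Proof.
move=> eigW; rewrite sub_kermx; apply/eqP/matrixP => r i.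
have [e Ae] := eigW i.
have -> : (kermx W *m A *m W) r i = (kermx W *m (A *m col i W)) r 0.
  by rewrite -!col_mulmx [RHS]mxE mulmxA.
by rewrite Ae -scalemxAr -col_mulmx mulmx_ker col0 scaler0 !mxE.
Qed.

Lemma mxrank_diag_unit (F : fieldType) n (d : 'rV[F]_n) :
  (forall i, d 0 i != 0) -> \rank (diag_mx d) = n.
Proof.
move=> d0; apply: mxrank_unit; rewrite unitmxE det_diag unitfE.
by apply/prodf_neq0 => i _; apply: d0.
Qed.

Lemma mxrank_diag_lt (F : fieldType) n (d : 'rV[F]_n) i :
  d 0 i = 0 -> (\rank (diag_mx d) < n)%N.
Proof.
move=> di0; apply: (@mxrank_col0 _ _ _ _ i); apply/colP => r.
by rewrite !mxE; case: eqP => [->|]; rewrite ?di0 ?mul0rn ?mulr0n.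
Qed.

Section FrobeniusSquare.
Variable R : realFieldType.
Implicit Types m n p : nat.

Definition sqfrob m n (A : 'M[R]_(m, n)) : R := \sum_i \sum_j A i j ^+ 2.

Lemma sqfrob_ge0 m n (A : 'M[R]_(m, n)) : 0 <= sqfrob A.
Proof. by apply: sumr_ge0 => i _; apply: sumr_ge0 => j _; apply: sqr_ge0. Qed.

Lemma sqfrob_eq0 m n (A : 'M[R]_(m, n)) : (sqfrob A == 0) = (A == 0).
Proof.
apply/idP/eqP => [|->]; last first.
  by rewrite /sqfrob big1 // => i _; rewrite big1 // => j _; rewrite mxE expr0n.
rewrite psumr_eq0 => [/allP A0|i _]; last by apply: sumr_ge0 => j _; apply: sqr_ge0.
apply/matrixP => i j; move: (A0 i (mem_index_enum _)).
rewrite psumr_eq0 => [/allP/(_ j (mem_index_enum _))|k _]; last exact: sqr_ge0.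
by rewrite sqrf_eq0 mxE => /eqP.
Qed.

Lemma sqfrob_trace m n (A : 'M[R]_(m, n)) : sqfrob A = \tr (A *m A^T).
Proof.
by apply: eq_bigr => i _; rewrite mxE; apply: eq_bigr => j _; rewrite mxE expr2.
Qed.

Lemma sqfrob_tr m n (A : 'M[R]_(m, n)) : sqfrob A^T = sqfrob A.
Proof.
rewrite /sqfrob exchange_big; apply: eq_bigr => j _.
by apply: eq_bigr => i _; rewrite mxE.
Qed.

Lemma sqfrob_traceT m n (A : 'M[R]_(m, n)) : sqfrob A = \tr (A^T *m A).
Proof. by rewrite -sqfrob_tr sqfrob_trace trmxK. Qed.

Lemma sqfrobZ m n (a : R) (A : 'M[R]_(m, n)) : sqfrob (a *: A) = a ^+ 2 * sqfrob A.
Proof.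
rewrite /sqfrob mulr_sumr; apply: eq_bigr => i _; rewrite mulr_sumr.
by apply: eq_bigr => j _; rewrite mxE exprMn.
Qed.

Lemma sqfrobN m n (A : 'M[R]_(m, n)) : sqfrob (- A) = sqfrob A.
Proof. by rewrite -scaleN1r sqfrobZ sqrrN expr1n mul1r. Qed.

Lemma sqfrobD m n (A B : 'M[R]_(m, n)) :
  sqfrob (A + B) = sqfrob A + sqfrob B + 2 * \tr (A^T *m B).
Proof.
rewrite !sqfrob_traceT [(A + B)^T]linearD /= mulmxDr !mulmxDl !mxtraceD.
by rewrite -[\tr (B^T *m A)]mxtrace_tr trmx_mul trmxK; ring.
Qed.

Lemma frob_cauchy_schwarz m n (A B : 'M[R]_(m, n)) :
  \tr (A^T *m B) ^+ 2 <= sqfrob A * sqfrob B.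
Proof.
have [B0|B0] := eqVneq (sqfrob B) 0.
  by move/eqP: (B0); rewrite sqfrob_eq0 => /eqP Bz; rewrite B0 Bz mulmx0 linear0 expr0n mulr0.
have Bpos : 0 < sqfrob B by rewrite lt_def B0 sqfrob_ge0.
have := sqfrob_ge0 (sqfrob B *: A - \tr (A^T *m B) *: B).
rewrite sqfrobD sqfrobN !sqfrobZ mulmxN [(_ *: A)^T]linearZ /= -scalemxAl -scalemxAr.
rewrite linearN /= !linearZ /=.
set a := sqfrob A; set b := sqfrob B; set t := \tr _ => h.
have : 0 <= b * (a * b - t ^+ 2) by lra.
by rewrite pmulr_rge0 // subr_ge0.
Qed.

Lemma sqfrob_mulmx_proj_le m n (A : 'M[R]_(m, n)) (P : 'M[R]_n) :
  P^T = P -> P *m P = P -> sqfrob (A *m P) <= sqfrob A.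
Proof.
move=> PT PP; set Q := 1%:M - P.
have QT : Q^T = Q by rewrite linearB /= trmx1 PT.
have QQ : Q *m Q = Q by rewrite mulmxBl mul1mx mulmxBr mulmx1 PP subrr subr0.
have sqfrob_proj X : X^T = X -> X *m X = X -> sqfrob (A *m X) = \tr (A *m X *m A^T).
  by move=> XT XX; rewrite sqfrob_trace trmx_mul XT !mulmxA -(mulmxA A X X) XX.
have -> : sqfrob A = sqfrob (A *m P) + sqfrob (A *m Q).
  rewrite (sqfrob_proj _ PT PP) (sqfrob_proj _ QT QQ) -mxtraceD -mulmxDl -mulmxDr.
  by rewrite addrC subrK mulmx1 sqfrob_trace.
by rewrite lerDl sqfrob_ge0.
Qed.

Lemma sqfrob_proj_mulmx_le m n (A : 'M[R]_(m, n)) (P : 'M[R]_m) :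
  P^T = P -> P *m P = P -> sqfrob (P *m A) <= sqfrob A.
Proof.
by move=> PT PP; rewrite -sqfrob_tr trmx_mul PT -(sqfrob_tr A) sqfrob_mulmx_proj_le.
Qed.

Lemma sqfrob_mulmx_orth_le m n p (A : 'M[R]_(m, n)) (B : 'M[R]_(n, p)) :
  B^T *m B = 1%:M -> sqfrob (A *m B) <= sqfrob A.
Proof.
move=> BB; have -> : sqfrob (A *m B) = sqfrob (A *m (B *m B^T)).
  by rewrite !sqfrob_trace !trmx_mul trmxK !mulmxA -(mulmxA _ B^T B) BB mulmx1.
apply: sqfrob_mulmx_proj_le; first by rewrite trmx_mul trmxK.
by rewrite mulmxA -(mulmxA B) BB mulmx1.
Qed.

Lemma sqfrob_tr_orth_mulmx_le m n p (A : 'M[R]_(m, n)) (B : 'M[R]_(m, p)) :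
  B^T *m B = 1%:M -> sqfrob (B^T *m A) <= sqfrob A.
Proof.
by move=> BB; rewrite -sqfrob_tr trmx_mul trmxK -(sqfrob_tr A) sqfrob_mulmx_orth_le.
Qed.

Lemma sqfrob_orth_mulmx m n p (A : 'M[R]_(n, p)) (B : 'M[R]_(m, n)) :
  B^T *m B = 1%:M -> sqfrob (B *m A) = sqfrob A.
Proof.
by move=> BB; rewrite !sqfrob_traceT trmx_mul mulmxA -(mulmxA _ B^T) BB mulmx1.
Qed.

Lemma sqfrob_mulmx_orthogonal m n (A : 'M[R]_(m, n)) (Q : 'M[R]_n) :
  Q^T *m Q = 1%:M -> sqfrob (A *m Q) = sqfrob A.
Proof.
move=> QQ; rewrite -sqfrob_tr trmx_mul sqfrob_orth_mulmx ?sqfrob_tr //.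
by rewrite trmxK; apply: mulmx1C.
Qed.

Lemma sqfrob_mulmx_orthD_le m n p q (A : 'M[R]_(m, n)) (X : 'M[R]_(n, p)) (Y : 'M[R]_(n, q)) :
  X^T *m X = 1%:M -> X^T *m Y = 0 -> Y^T *m Y *m Y^T = Y^T ->
  sqfrob (A *m X) + sqfrob (A *m Y) <= sqfrob A.
Proof.
move=> XX XY YY; set P := X *m X^T + Y *m Y^T.
have PT : P^T = P by rewrite linearD /= !trmx_mul !trmxK.
have YX : Y^T *m X = 0 by rewrite -[LHS]trmxK trmx_mul trmxK XY trmx0.
have PP : P *m P = P.
  rewrite mulmxDl !mulmxDr !mulmxA -!(mulmxA _ _ X) -!(mulmxA _ _ Y) XX XY YX.
  by rewrite -(mulmxA Y (Y^T *m Y)) YY !mulmx0 !mul0mx mulmx1 addr0 add0r.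
have -> : sqfrob (A *m X) + sqfrob (A *m Y) = sqfrob (A *m P).
  rewrite !sqfrob_trace !trmx_mul PT -(mulmxA A P) (mulmxA P) PP -mxtraceD.
  by rewrite /P mulmxDl mulmxDr !mulmxA.
exact: sqfrob_mulmx_proj_le.
Qed.

Lemma sqfrob_mulmx_diag_ge m n (X : 'M[R]_(m, n)) (d : 'rV[R]_n) c :
  (forall i j, c * X i j ^+ 2 <= (X i j * d 0 j) ^+ 2) ->
  c * sqfrob X <= sqfrob (X *m diag_mx d).
Proof.
move=> Xd; rewrite /sqfrob mulr_sumr; apply: ler_sum => i _; rewrite mulr_sumr.
by apply: ler_sum => j _; rewrite mul_mx_diag mxE.
Qed.

Lemma sqfrob_row n (y : 'rV[R]_n) : y *m y^T = (sqfrob y)%:M.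
Proof. by rewrite sqfrob_trace [LHS]mx11_scalar /mxtrace big_ord1. Qed.

Lemma sqfrob_col n (x : 'cV[R]_n) : x^T *m x = (sqfrob x)%:M.
Proof. by rewrite -sqfrob_tr -sqfrob_row trmxK. Qed.

Lemma mulmx_tr_diagE m n (A : 'M[R]_(m, n)) i : (A^T *m A) i i = sqfrob (col i A).
Proof.
by rewrite /sqfrob mxE; apply: eq_bigr => r _; rewrite big_ord1 !mxE expr2.
Qed.

Definition proj_compl m n (V : 'M[R]_(m, n)) : 'M[R]_m := 1%:M - V *m V^T.

Section ProjCompl.
Variables (m n : nat) (V : 'M[R]_(m, n)).
Hypothesis VV : V^T *m V = 1%:M.

Lemma proj_compl_sym : (proj_compl V)^T = proj_compl V.
Proof. by rewrite linearB /= trmx1 trmx_mul trmxK. Qed.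

Lemma proj_compl_idem : proj_compl V *m proj_compl V = proj_compl V.
Proof.
by rewrite mulmxBl mul1mx mulmxBr mulmx1 mulmxA -(mulmxA V) VV mulmx1 subrr subr0.
Qed.

Lemma mulmx_proj_compl : V^T *m proj_compl V = 0.
Proof. by rewrite mulmxBr mulmx1 mulmxA VV mul1mx subrr. Qed.

Lemma sqfrob_proj_compl p (Y : 'M[R]_(m, p)) :
  sqfrob (proj_compl V *m Y) = sqfrob Y - sqfrob (V^T *m Y).
Proof.
rewrite !sqfrob_traceT trmx_mul proj_compl_sym -mulmxA (mulmxA (proj_compl V)) proj_compl_idem.
by rewrite /proj_compl mulmxBl mul1mx mulmxBr linearB /= trmx_mul trmxK !mulmxA.
Qed.

End ProjCompl.

Definition coord_proj n (S : {set 'I_n}) : 'M[R]_n := diag_mx (\row_i (i \in S)%:R).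

Lemma coord_proj_sym n (S : {set 'I_n}) : (coord_proj S)^T = coord_proj S.
Proof. exact: tr_diag_mx. Qed.

Lemma coord_proj_idem n (S : {set 'I_n}) : coord_proj S *m coord_proj S = coord_proj S.
Proof.
rewrite mulmx_diag; congr diag_mx; apply/rowP => i.
by rewrite !mxE; case: (i \in S); rewrite ?mulr1 ?mulr0.
Qed.

Lemma mxtrace_coord_proj n (S : {set 'I_n}) : \tr (coord_proj S) = #|S|%:R.
Proof.
rewrite mxtrace_diag -sum1_card natr_sum [RHS]big_mkcond.
by apply: eq_bigr => i _; rewrite mxE; case: (i \in S).
Qed.

Lemma col_coord_proj m n (X : 'M[R]_(m, n)) S i :
  col i (X *m coord_proj S) = if i \in S then col i X else 0.
Proof.
apply/colP => r; rewrite mxE mul_mx_diag.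
by case: ifP => iS; rewrite !mxE iS ?mulr1 ?mulr0.
Qed.

Lemma coord_proj_mulmxE m n (X : 'M[R]_(n, m)) S i j :
  (coord_proj S *m X) i j = if i \in S then X i j else 0.
Proof. by rewrite mul_diag_mx mxE; case: ifP => iS; rewrite !mxE iS ?mul1r ?mul0r. Qed.

Lemma coord_projC_mulmxE m n (X : 'M[R]_(n, m)) S i j :
  ((1%:M - coord_proj S) *m X) i j = if i \in S then 0 else X i j.
Proof.
have -> : ((1%:M - coord_proj S) *m X) i j = X i j - (coord_proj S *m X) i j.
  by rewrite mulmxBl mul1mx !mxE.
by rewrite coord_proj_mulmxE; case: ifP; rewrite ?subrr ?subr0.
Qed.

Lemma sqfrob_coord_split m n (X : 'M[R]_(n, m)) S :
  sqfrob X = sqfrob (coord_proj S *m X) + sqfrob ((1%:M - coord_proj S) *m X).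
Proof.
rewrite /sqfrob -big_split; apply: eq_bigr => i _; rewrite -big_split; apply: eq_bigr => j _.
rewrite /= coord_proj_mulmxE coord_projC_mulmxE.
by case: (i \in S); rewrite expr0n ?addr0 ?add0r.
Qed.

End FrobeniusSquare.

Arguments coord_proj {R n} S.

Section Frobenius.
Variable R : rcfType.
Implicit Types m n : nat.

Lemma frob_ge0 m n (A : 'M[R]_(m, n)) : 0 <= frob A.
Proof. exact: sqrtr_ge0. Qed.

Lemma frob_sqr m n (A : 'M[R]_(m, n)) : frob A ^+ 2 = sqfrob A.
Proof. by rewrite sqr_sqrtr // sqfrob_ge0. Qed.

Lemma frobN m n (A : 'M[R]_(m, n)) : frob (- A) = frob A.
Proof. by rewrite /frob -/(sqfrob _) sqfrobN. Qed.

Lemma ler_frobD m n (A B : 'M[R]_(m, n)) : frob (A + B) <= frob A + frob B.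
Proof.
have dot_le : \tr (A^T *m B) <= frob A * frob B.
  apply: le_trans (ler_norm _) _.
  rewrite -(ler_pXn2r (_ : (0 < 2)%N)) ?nnegrE ?normr_ge0 ?mulr_ge0 ?frob_ge0 //.
  by rewrite real_normK ?num_real // exprMn !frob_sqr frob_cauchy_schwarz.
rewrite -(ler_pXn2r (_ : (0 < 2)%N)) ?nnegrE ?addr_ge0 ?frob_ge0 //.
by rewrite frob_sqr sqfrobD -!frob_sqr; lra.
Qed.

Lemma ler_dist_frob m n (A B : 'M[R]_(m, n)) : `|frob A - frob B| <= frob (A - B).
Proof.
have := ler_frobD (A - B) B; have := ler_frobD (B - A) A.
rewrite !subrK -opprB frobN => hB hA.
by rewrite ler_norml; apply/andP; split; lra.
Qed.

End Frobenius.

Lemma sqr_div4_le (R : realFieldType) (g x : R) :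
  0 <= g -> g / 2 <= `|x| -> g ^+ 2 / 4 <= x ^+ 2.
Proof.
move=> g0 gx; rewrite (_ : g ^+ 2 / 4 = (g / 2) ^+ 2); last by rewrite expr_div_n; lra.
by rewrite -[x ^+ 2]real_normK ?num_real // ler_pXn2r ?nnegrE ?normr_ge0 //; lra.
Qed.

Lemma sqr_gap (R : realFieldType) (x y g : R) :
  `|x| <= g / 2 -> g <= `|y| -> g ^+ 2 / 4 <= (x - y) ^+ 2.
Proof.
move=> xg gy; have := ler_normD (y - x) x; rewrite subrK distrC => hxy.
by have := normr_ge0 x; move=> x0; apply: sqr_div4_le; lra.
Qed.

Lemma distmat_sym (R : rcfType) n T (P : 'I_T -> 'M[R]_n) : (distmat P)^T = distmat P.
Proof. by apply/matrixP => i j; rewrite !mxE -opprB frobN. Qed.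

Lemma sqfrob_distmatB (R : rcfType) n T (P Ph : 'I_T -> 'M[R]_n) :
  sqfrob (distmat Ph - distmat P) <= 4 * T%:R * \sum_i frob (Ph i - P i) ^+ 2.
Proof.
pose a i := frob (Ph i - P i).
have entry_le i j : (distmat Ph - distmat P) i j ^+ 2 <= 2 * a i ^+ 2 + 2 * a j ^+ 2.
  have : `|(distmat Ph - distmat P) i j| <= a i + a j.
    rewrite !mxE; apply: le_trans (ler_dist_frob _ _) _.
    have -> : Ph i - Ph j - (P i - P j) = (Ph i - P i) - (Ph j - P j).
      by rewrite !opprB addrACA [RHS]addrACA [- Ph j - P i]addrC.
    by rewrite /a -(frobN (Ph j - P j)); apply: ler_frobD.
  have := frob_ge0 (Ph i - P i); have := frob_ge0 (Ph j - P j).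
  rewrite ler_norml -/(a i) -/(a j) => ha hb /andP [lo hi].
  have := sqr_ge0 (a i - a j); nra.
apply: le_trans (_ : \sum_i \sum_j (2 * a i ^+ 2 + 2 * a j ^+ 2) <= _).
  by apply: ler_sum => i _; apply: ler_sum => j _; apply: entry_le.
rewrite (eq_bigr (fun i => 2 * a i ^+ 2 *+ T + 2 * \sum_j a j ^+ 2)) => [|i _]; last first.
  by rewrite big_split /= sumr_const card_ord mulr_sumr.
rewrite big_split /= sumr_const card_ord sumrMnl -mulr_sumr.
have -> : \sum_i frob (Ph i - P i) ^+ 2 = \sum_i a i ^+ 2 by [].
set s := \sum_i a i ^+ 2.
suff -> : 2 * s *+ T + 2 * s *+ T = 4 * T%:R * s by [].
by rewrite -mulrnDl -mulr_natr; ring.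
Qed.

Lemma sym_eigval_Im_eq0 (R : realFieldType) n (A : 'M[R]_n) (a b : 'rV[R]_n) (al be : R) :
  A^T = A -> (a != 0) || (b != 0) ->
  a *m A = al *: a - be *: b -> b *m A = be *: a + al *: b -> be = 0.
Proof.
move=> AT ab0 aA bA.
have sym : (a *m A) *m b^T = a *m (b *m A)^T by rewrite trmx_mul AT mulmxA.
rewrite aA bA mulmxBl [(_ + _)^T]linearD !linearZ /= mulmxDr in sym.
move: sym; rewrite -!scalemxAl -!scalemxAr !sqfrob_row [a *m b^T]mx11_scalar.
move/matrixP/(_ 0 0); rewrite !mxE eqxx !mulr1n => sym.
have ab_pos : 0 < sqfrob a + sqfrob b.
  rewrite lt_def paddr_eq0 ?sqfrob_ge0 // !sqfrob_eq0 negb_and ab0.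
  by rewrite addr_ge0 ?sqfrob_ge0.
have : be * (sqfrob a + sqfrob b) = 0 by lra.
by move/eqP; rewrite mulf_eq0 (gt_eqF ab_pos) orbF => /eqP.
Qed.

Section RealEigenvector.
Variable R : rcfType.
Local Notation Re := (@complex.Re R).
Local Notation Im := (@complex.Im R).
Local Notation toC := (real_complex R).

Lemma Re_sum m (F : 'I_m -> R[i]) : Re (\sum_k F k) = \sum_k Re (F k).
Proof. by apply: (big_morph _ (fun x y => _) (erefl _)) => [] [? ?] []. Qed.

Lemma Im_sum m (F : 'I_m -> R[i]) : Im (\sum_k F k) = \sum_k Im (F k).
Proof. by apply: (big_morph _ (fun x y => _) (erefl _)) => [] [? ?] []. Qed.

Lemma map_Re_mulmx_real p m q (w : 'M[R[i]]_(p, m)) (M : 'M[R]_(m, q)) :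
  map_mx Re (w *m map_mx toC M) = map_mx Re w *m M.
Proof.
apply/matrixP => i j; rewrite !mxE Re_sum; apply: eq_bigr => k _.
by rewrite !mxE; case: (w i k) => a b /=; rewrite mulr0 subr0.
Qed.

Lemma map_Im_mulmx_real p m q (w : 'M[R[i]]_(p, m)) (M : 'M[R]_(m, q)) :
  map_mx Im (w *m map_mx toC M) = map_mx Im w *m M.
Proof.
apply/matrixP => i j; rewrite !mxE Im_sum; apply: eq_bigr => k _.
by rewrite !mxE; case: (w i k) => a b /=; rewrite mulr0 add0r.
Qed.

(* The complex eigenvalue of the restriction of [A] to [U] is real by
   symmetry, so the real or the imaginary part of a complex eigenvector is a
   real one. *)
Lemma sym_stablemx_eigenvector n m (A : 'M[R]_n) (U : 'M[R]_(m, n)) :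
  A^T = A -> stablemx U A -> U != 0 ->
  exists2 y : 'rV[R]_n, (y <= U)%MS & y != 0 /\ exists e, y *m A = e *: y.
Proof.
move=> AT UA U0; set B := row_base U.
have [D BAD] : exists D, B *m A = D *m B by apply/submxP; rewrite stablemx_row_base.
have [l /eigenvalueP [w wD w0]] : exists l, eigenvalue (map_mx toC D) l.
  have /closed_rootP [l rl] : size (char_poly (map_mx toC D)) != 1%N.
    by rewrite size_char_poly; move: U0; rewrite -mxrank_eq0; case: (\rank U).
  by exists l; rewrite eigenvalue_root_char.
set v := w *m map_mx toC B.
have vA : v *m map_mx toC A = l *: v.
  by rewrite -mulmxA -map_mxM BAD map_mxM mulmxA wD scalemxAl.
have v0 : v != 0.
  by rewrite mulmx_free_eq0 // /row_free mxrank_map; apply: row_base_free.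
set a := map_mx Re v; set b := map_mx Im v.
have aU : (a <= U)%MS by rewrite /a /v map_Re_mulmx_real -(eq_row_base U) submxMl.
have bU : (b <= U)%MS by rewrite /b /v map_Im_mulmx_real -(eq_row_base U) submxMl.
clearbody v.
have aA : a *m A = Re l *: a - Im l *: b.
  rewrite -map_Re_mulmx_real vA; apply/rowP => j; rewrite !mxE.
  by case: (v 0 j) (l) => ? ? [? ?].
have bA : b *m A = Im l *: a + Re l *: b.
  rewrite -map_Im_mulmx_real vA; apply/rowP => j; rewrite !mxE.
  by case: (v 0 j) (l) => ? ? [? ?] /=; rewrite addrC.
have ab0 : (a != 0) || (b != 0).
  apply: contraNT v0; rewrite negb_or !negbK => /andP [/eqP a0 /eqP b0].
  apply/eqP/rowP => j; move/rowP: a0 => /(_ j); move/rowP: b0 => /(_ j).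
  by rewrite !mxE; case: (v 0 j) => x y /= -> ->.
have Im_l : Im l = 0 := sym_eigval_Im_eq0 AT ab0 aA bA.
case/orP: ab0 => [a0|b0]; [exists a | exists b] => //; split => //; exists (Re l).
  by rewrite aA Im_l scale0r subr0.
by rewrite bA Im_l scale0r add0r.
Qed.

End RealEigenvector.

Section OrthonormalBases.
Variable R : rcfType.

Definition set_col n (X : 'M[R]_n) (j : 'I_n) (x : 'cV[R]_n) : 'M[R]_n :=
  \matrix_(r, k) if k == j then x r 0 else X r k.

Lemma col_set_col n (X : 'M[R]_n) j x k :
  col k (set_col X j x) = if k == j then x else col k X.
Proof. by apply/colP => r; rewrite !mxE; case: (k == j); rewrite ?mxE. Qed.

Definition orthonormal_on n (S : {set 'I_n}) (X : 'M[R]_n) :=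
  {in S &, forall i k, (col i X)^T *m col k X = (i == k)%:R%:M}.

Lemma orthonormal_basis_ind n (H : {set 'I_n} -> 'M[R]_n -> Prop) :
  H set0 0 ->
  (forall S X j, orthonormal_on S X -> H S X -> j \notin S ->
     exists x : 'cV[R]_n, [/\ x^T *m x = 1%:M,
       {in S, forall i, x^T *m col i X = 0} & H (j |: S) (set_col X j x)]) ->
  exists X : 'M[R]_n, X^T *m X = 1%:M /\ H setT X.
Proof.
move=> H0 Hstep.
have grow k : (k <= n)%N ->
    exists (S : {set 'I_n}) (X : 'M[R]_n), [/\ #|S| = k, orthonormal_on S X & H S X].
  elim: k => [_|k IHk lt_kn].
    by exists set0, 0; rewrite cards0; split => // i i'; rewrite inE.
  have [S [X [cardS oS HS]]] := IHk (ltnW lt_kn).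
  have [j] : exists j, j \in ~: S.
    by apply/card_gt0P; rewrite -(ltn_add2l #|S|) addn0 cardsC cardS card_ord.
  rewrite inE => jS.
  have [x [xx xX Hx]] := Hstep S X j oS HS jS.
  exists (j |: S), (set_col X j x); split => //; first by rewrite cardsU1 jS cardS.
  move=> i i'; rewrite !in_setU1 !col_set_col.
  have Xx l : l \in S -> (col l X)^T *m x = 0.
    by move=> lS; rewrite -[LHS]trmxK trmx_mul trmxK xX // trmx0.
  case: (eqVneq i j) => [->|ij]; case: (eqVneq i' j) => [->|i'j] /= iS i'S.
  - exact: xx.
  - by rewrite xX // raddf0.
  - by rewrite Xx // (negbTE ij) raddf0.
  - exact: oS.
have [S [X [cardS oS HS]]] := grow n (leqnn n).
have ST : S = setT by apply/eqP; rewrite eqEcard subsetT cardsT card_ord cardS /=.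
exists X; split; last by rewrite -ST.
by apply/matrixP => i k; rewrite trmx_mul_colE oS ?ST ?inE // !mxE eqxx mulr1n.
Qed.

End OrthonormalBases.

Section Spectral.
Variable R : rcfType.

Lemma unit_col_of_row n (y : 'rV[R]_n) : y != 0 ->
  exists c : R, (c *: y^T)^T *m (c *: y^T) = 1%:M.
Proof.
move=> y0; have y_gt0 : 0 < sqfrob y by rewrite lt_def sqfrob_eq0 y0 sqfrob_ge0.
exists (Num.sqrt (sqfrob y))^-1.
rewrite [(_ *: _)^T]linearZ /= trmxK -scalemxAl -scalemxAr scalerA -expr2 exprVn.
by rewrite sqr_sqrtr ?ltW // sqfrob_row scale_scalar_mx mulVf ?gt_eqF.
Qed.

Lemma unit_eigenvector_orthogonal n p (A : 'M[R]_n) (W : 'M[R]_(n, p)) :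
  A^T = A -> stablemx (kermx W) A -> (\rank W < n)%N ->
  exists x : 'cV[R]_n, [/\ x^T *m x = 1%:M, x^T *m W = 0 & exists e, A *m x = e *: x].
Proof.
move=> AT stW rkW.
have ker0 : kermx W != 0 by rewrite -mxrank_eq0 mxrank_ker subn_eq0 -ltnNge.
have [y yW [y0 [e yA]]] := sym_stablemx_eigenvector AT stW ker0.
have [c cc] := unit_col_of_row y0.
exists (c *: y^T); split => //.
  by rewrite linearZ /= trmxK -scalemxAl (sub_kermxP yW) scaler0.
exists e; rewrite -scalemxAr -[A]AT -trmx_mul yA linearZ /=.
by rewrite scalerA mulrC -scalerA.
Qed.

Theorem symmetric_diagonalization n (A : 'M[R]_n) : A^T = A ->
  exists (Z : 'M[R]_n) (d : 'rV[R]_n), Z^T *m Z = 1%:M /\ A *m Z = Z *m diag_mx d.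
Proof.
move=> AT.
have [Z [ZZ eigZ]] : exists Z : 'M[R]_n, Z^T *m Z = 1%:M /\
    {in setT, forall i, exists e, A *m col i Z = e *: col i Z}.
  apply: (orthonormal_basis_ind
    (H := fun S X => {in S, forall i, exists e, A *m col i X = e *: col i X})).
    by move=> i; rewrite inE.
  move=> S X j _ eigX jS.
  set W := X *m coord_proj S.
  have eigW i : exists e, A *m col i W = e *: col i W.
    rewrite col_coord_proj; case: ifP => [iS|_]; first exact: eigX.
    by exists 0; rewrite mulmx0 scaler0.
  have Wj0 : col j W = 0 by rewrite col_coord_proj (negbTE jS).
  have [x [xx xW [e Ax]]] := unit_eigenvector_orthogonal AT
    (stablemx_kermx_eigencols eigW) (mxrank_col0 Wj0).
  exists x; split => // [i iS|i].
    by have := congr1 (col i) xW; rewrite col_mulmx col_coord_proj iS col0.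
  rewrite in_setU1 col_set_col => /orP [/eqP ->|iS]; first by rewrite eqxx; exists e.
  by case: eqP => [_|_]; [exists e | exact: eigX].
exists Z, (\row_i (Z^T *m A *m Z) i i); split => //.
apply/matrixP => r i; have [e Ae] := eigZ i (in_setT i).
have Zi : (col i Z)^T *m col i Z = 1%:M.
  by rewrite [LHS]mx11_scalar -trmx_mul_colE ZZ !mxE eqxx.
have dE : (Z^T *m A *m Z) i i = e.
  rewrite -mulmxA trmx_mul_colE col_mulmx Ae -scalemxAr Zi.
  by rewrite !mxE eqxx mulr1.
rewrite mul_mx_diag 2![in RHS]mxE dE mulrC.
move/colP: Ae => /(_ r); rewrite -col_mulmx [LHS]mxE => ->.
by rewrite !mxE.
Qed.

End Spectral.

Section AlignColumns.
Variables (R : rcfType) (n : nat) (N : 'M[R]_n) (s : 'rV[R]_n).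
Hypothesis NN : N^T *m N = diag_mx s.

Let Ndot i k : (col i N)^T *m col k N = ((i == k)%:R * s 0 i)%:M.
Proof. by rewrite [LHS]mx11_scalar -trmx_mul_colE NN !mxE mulr_natl. Qed.

Let sqfrob_colN i : sqfrob (col i N) = s 0 i.
Proof. by rewrite -mulmx_tr_diagE NN mxE eqxx mulr1n. Qed.

Lemma align_col_exists (S : {set 'I_n}) (X : 'M[R]_n) j : j \notin S ->
  {in S, forall i, (col i X)^T *m col j N = 0} ->
  exists x : 'cV[R]_n, [/\ x^T *m x = 1%:M, {in S, forall i, x^T *m col i X = 0},
    x^T *m col j N = (Num.sqrt (s 0 j))%:M &
    {in ~: (j |: S), forall k, x^T *m col k N = 0}].
Proof.
move=> jS XNj; have [sj0|sj_neq0] := eqVneq (s 0 j) 0.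
  have Nj0 : col j N = 0 by apply/eqP; rewrite -sqfrob_eq0 sqfrob_colN sj0.
  set W := X *m coord_proj S + N *m coord_proj (~: (j |: S)).
  have colW i : col i W = (if i \in S then col i X else 0) +
                          (if i \in ~: (j |: S) then col i N else 0).
    by rewrite [LHS]linearD /= !col_coord_proj.
  have Wj0 : col j W = 0 by rewrite colW (negbTE jS) !inE eqxx addr0.
  have [x [xx xW _]] := unit_eigenvector_orthogonal (trmx0 _ _ _)
    (stablemx0 (kermx W)) (mxrank_col0 Wj0).
  have xW_col i : x^T *m col i W = 0 by rewrite -col_mulmx xW col0.
  exists x; split => // [i iS||k kS].
  - by have := xW_col i; rewrite colW iS !inE iS orbT /= addr0.
  - by rewrite Nj0 sj0 sqrtr0 mulmx0 raddf0.
  - have := xW_col k; rewrite colW kS; move: kS; rewrite !inE negb_or.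
    by case/andP => _ /negbTE ->; rewrite add0r.
have sj_gt0 : 0 < s 0 j by rewrite lt_def sj_neq0 -sqfrob_colN sqfrob_ge0.
set c := (Num.sqrt (s 0 j))^-1.
have c2 : c ^+ 2 * s 0 j = 1 by rewrite exprVn sqr_sqrtr ?mulVf ?ltW.
exists (c *: col j N); split => [|i iS||k].
- rewrite [(_ *: _)^T]linearZ /= -scalemxAl -scalemxAr scalerA -expr2.
  by rewrite sqfrob_col sqfrob_colN scale_scalar_mx c2.
- rewrite [(_ *: _)^T]linearZ /= -scalemxAl -[_ *m col i X]trmxK trmx_mul trmxK.
  by rewrite XNj ?trmx0 ?scaler0.
- rewrite [(_ *: _)^T]linearZ /= -scalemxAl Ndot eqxx mul1r scale_scalar_mx.
  by rewrite /c -{2}(sqr_sqrtr (ltW sj_gt0)) expr2 mulrA mulVf ?mul1r // gt_eqF ?sqrtr_gt0.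
- rewrite !inE negb_or => /andP [kj _]; rewrite [(_ *: _)^T]linearZ /= -scalemxAl.
  by rewrite Ndot eq_sym (negbTE kj) mul0r raddf0 scaler0.
Qed.

Lemma orthogonal_cols_align :
  exists U : 'M[R]_n, U^T *m U = 1%:M /\ forall i, (U^T *m N) i i = Num.sqrt (s 0 i).
Proof.
pose H (S : {set 'I_n}) (X : 'M[R]_n) :=
  {in S, forall i, (col i X)^T *m col i N = (Num.sqrt (s 0 i))%:M
                   /\ {in ~: S, forall k, (col i X)^T *m col k N = 0}}.
have [U [UU HU]] : exists U, U^T *m U = 1%:M /\ H setT U.
  apply: orthonormal_basis_ind => [i|S X j _ HX jS]; first by rewrite inE.
  have XNj : {in S, forall i, (col i X)^T *m col j N = 0}.
    by move=> i iS; apply: (HX i iS).2; rewrite inE.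
  have [x [xx xX xNj xN]] := align_col_exists jS XNj.
  exists x; split => // i; rewrite in_setU1 col_set_col => /orP [/eqP ->|iS].
    by rewrite eqxx.
  have [XNi XN] := HX i iS; rewrite ifN; last by apply: contraNneq jS => <-.
  by split => // k; rewrite !inE negb_or => /andP [_ kS]; apply: XN; rewrite inE.
exists U; split => // i; have [UNi _] := HU i (in_setT i).
by rewrite trmx_mul_colE UNi mxE eqxx.
Qed.

End AlignColumns.

Section Polar.
Variable R : rcfType.

(* The polar decomposition [M = O (M^T M)^(1/2)] gives [\tr (O^T M) = \sum_i
   sigma_i], and the singular values [sigma_i] of a contraction are at most 1. *)
Lemma contraction_polar n (M : 'M[R]_n) :
  (forall x : 'cV[R]_n, sqfrob (M *m x) <= sqfrob x) ->
  exists O : 'M[R]_n, O^T *m O = 1%:M /\ sqfrob M <= \tr (O^T *m M).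
Proof.
move=> Mcontr.
have MMT : (M^T *m M)^T = M^T *m M by rewrite trmx_mul trmxK.
have [Q [s [QQ MMQ]]] := symmetric_diagonalization MMT.
set N := M *m Q.
have NN : N^T *m N = diag_mx s.
  by rewrite trmx_mul -mulmxA (mulmxA M^T) MMQ mulmxA QQ mul1mx.
have sE i : s 0 i = sqfrob (col i N) by rewrite -mulmx_tr_diagE NN mxE eqxx mulr1n.
have s_le1 i : s 0 i <= 1.
  rewrite sE col_mulmx (le_trans (Mcontr _)) //.
  by rewrite -mulmx_tr_diagE QQ mxE eqxx.
have [U [UU UN]] := orthogonal_cols_align NN.
exists (U *m Q^T); split.
  by rewrite trmx_mul trmxK mulmxA -(mulmxA Q) UU mulmx1 mulmx1C.
have -> : \tr ((U *m Q^T)^T *m M) = \sum_i Num.sqrt (s 0 i).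
  rewrite trmx_mul trmxK -mulmxA mxtrace_mulC -mulmxA.
  by apply: eq_bigr => i _; rewrite UN.
rewrite -(sqfrob_mulmx_orthogonal M QQ) sqfrob_traceT NN mxtrace_diag.
apply: ler_sum => i _.
have := sqrtr_ge0 (s 0 i); have := sqr_sqrtr (sqfrob_ge0 (col i N)); rewrite -sE.
have : Num.sqrt (s 0 i) <= 1 by rewrite -sqrtr1 ler_sqrt ?s_le1.
nra.
Qed.

Lemma orthonormal_frames_align m n (V Vh : 'M[R]_(m, n)) :
  V^T *m V = 1%:M -> Vh^T *m Vh = 1%:M ->
  exists O : 'M[R]_n, O^T *m O = 1%:M /\
    sqfrob (Vh *m O - V) <= 2 * sqfrob (proj_compl Vh *m V).
Proof.
move=> VV VhVh.
have contr (x : 'cV[R]_n) : sqfrob (Vh^T *m V *m x) <= sqfrob x.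
  by rewrite -mulmxA (le_trans (sqfrob_tr_orth_mulmx_le _ VhVh)) // sqfrob_orth_mulmx.
have [O [OO trO]] := contraction_polar contr.
exists O; split => //.
rewrite sqfrob_proj_compl // sqfrobD sqfrobN (sqfrob_orth_mulmx O VhVh).
rewrite mulmxN linearN /= trmx_mul -mulmxA.
have -> : sqfrob O = sqfrob V by rewrite !sqfrob_traceT OO VV.
lra.
Qed.

End Polar.

Section ComplementEigen.
Variables (R : realFieldType) (T K : nat) (A : 'M[R]_T) (V : 'M[R]_(T, K)) (lam : 'rV[R]_K).
Hypotheses (AT : A^T = A) (VV : V^T *m V = 1%:M) (AV : A *m V = V *m diag_mx lam).

Lemma proj_compl_comm : A *m proj_compl V = proj_compl V *m A.
Proof.
have VA : V^T *m A = diag_mx lam *m V^T by rewrite -[A]AT -trmx_mul AV trmx_mul tr_diag_mx.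
by rewrite mulmxBr mulmxBl mulmx1 mul1mx mulmxA AV -!mulmxA VA.
Qed.

Lemma proj_compl_mulmx_sym : (A *m proj_compl V)^T = A *m proj_compl V.
Proof. by rewrite trmx_mul proj_compl_sym AT proj_compl_comm. Qed.

Lemma compl_eigvec (z : 'cV[R]_T) mu :
  mu != 0 -> A *m proj_compl V *m z = mu *: z -> V^T *m z = 0 /\ A *m z = mu *: z.
Proof.
move=> mu0 Az.
have Vz : V^T *m z = 0.
  have : mu *: (V^T *m z) = 0.
    by rewrite scalemxAr -Az proj_compl_comm !mulmxA mulmx_proj_compl // !mul0mx.
  by move/eqP; rewrite scaler_eq0 (negbTE mu0) => /eqP.
split => //; rewrite -Az -mulmxA.
by rewrite /proj_compl mulmxBl mul1mx -mulmxA Vz mulmx0 subr0.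
Qed.

End ComplementEigen.

Lemma top_compl_eigval (R : rcfType) T K (A : 'M[R]_T) (V : 'M[R]_(T, K)) lam
    (z : 'cV[R]_T) mu :
  A^T = A -> top_abs_eigvecs A V lam -> z != 0 -> mu != 0 ->
  A *m proj_compl V *m z = mu *: z -> forall k, `|mu| <= `|lam 0 k|.
Proof.
move=> AT [VV AV top] z0 mu0 Az; have [Vz Az'] := compl_eigvec AT VV AV mu0 Az.
exact: top Vz z0 Az'.
Qed.

(* An eigenvector of [A] orthogonal to [V] with a nonzero eigenvalue would be
   dominated by every [lam k], hence would raise the rank of [A] above [K]. *)
Lemma top_eigvecs_compl_eigval (R : rcfType) T K (A : 'M[R]_T) (V : 'M[R]_(T, K)) lam
    (z : 'cV[R]_T) mu :
  A^T = A -> \rank A = K -> top_abs_eigvecs A V lam ->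
  z^T *m z = 1%:M -> A *m proj_compl V *m z = mu *: z -> mu = 0.
Proof.
move=> AT rkA top zz Az; have [VV AV _] := top.
apply/eqP/negP => /negP mu0.
have z0 : z != 0 by rewrite -sqfrob_eq0 -sqfrob_tr sqfrob_trace trmxK zz mxtrace1 oner_eq0.
have [Vz Az'] := compl_eigvec AT VV AV mu0 Az.
have lam0 k : lam 0 k != 0.
  by rewrite -normr_gt0 (lt_le_trans _ (top_compl_eigval AT top z0 mu0 Az k)) ?normr_gt0.
set B := row_mx V z; pose d : 'rV[R]_(K + 1) := row_mx lam (const_mx mu).
have BB : B^T *m B = 1%:M.
  rewrite tr_row_mx mul_col_row VV zz -[z^T *m V]trmxK trmx_mul trmxK Vz trmx0.
  by rewrite -scalar_mx_block.
have AB : A *m B = B *m diag_mx d.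
  rewrite mul_mx_row diag_mx_row mul_row_block !mulmx0 addr0 add0r AV Az'.
  by rewrite diag_const_mx mul_mx_scalar.
have d0 j : d 0 j != 0.
  by rewrite /d mxE; case: splitP => j' _; rewrite ?mxE ?eqxx ?mulr1n.
have : (K + 1 <= \rank A)%N.
  rewrite -{1}(mxrank_diag_unit d0) -[diag_mx d]mul1mx -BB -mulmxA -AB.
  exact: leq_trans (mxrankM_maxr _ _) (mxrankM_maxl _ _).
by rewrite rkA addn1 ltnn.
Qed.

Lemma top_eigvecs_rank (R : rcfType) T K (A : 'M[R]_T) (V : 'M[R]_(T, K)) lam :
  A^T = A -> \rank A = K -> top_abs_eigvecs A V lam ->
  (forall k, lam 0 k != 0) /\ A *m proj_compl V = 0.
Proof.
move=> AT rkA top; have [VV AV _] := top.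
have [Z [mu [ZZ AQZ]]] := symmetric_diagonalization (proj_compl_mulmx_sym AT AV).
have AQ : A *m proj_compl V = 0.
  rewrite -[LHS]mulmx1 -(mulmx1C ZZ) mulmxA AQZ.
  have -> : mu = 0.
    apply/rowP => i; rewrite mxE.
    apply: (top_eigvecs_compl_eigval (z := col i Z) AT rkA top).
      by rewrite sqfrob_col -mulmx_tr_diagE ZZ mxE eqxx.
    by rewrite -col_mulmx AQZ col_mul_diag.
  by rewrite raddf0 mulmx0 mul0mx.
split => // k; apply/eqP => lk0.
have : A = V *m diag_mx lam *m V^T.
  rewrite -AV -mulmxA -[LHS]mulmx1 -(subrK (V *m V^T) 1%:M) mulmxDr.
  by rewrite -/(proj_compl V) AQ add0r.
move/(congr1 mxrank); rewrite rkA => rkK.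
move: (mxrank_diag_lt lk0); rewrite [X in (_ < X)%N]rkK ltnNge.
by rewrite (leq_trans (mxrankM_maxl _ _) (mxrankM_maxr _ _)).
Qed.

Lemma sqfrob_proj_compl_orthD_ge (R : realFieldType) T K q (V X : 'M[R]_(T, K))
    (Y : 'M[R]_(T, q)) :
  V^T *m V = 1%:M -> X^T *m X = 1%:M -> X^T *m Y = 0 -> Y^T *m Y *m Y^T = Y^T ->
  sqfrob Y <= sqfrob (proj_compl V *m X) + sqfrob (proj_compl V *m Y).
Proof.
move=> VV XX XY YY; rewrite !sqfrob_proj_compl //.
have := sqfrob_mulmx_orthD_le V^T XX XY YY.
have -> : sqfrob X = sqfrob V^T by rewrite sqfrob_tr !sqfrob_traceT XX VV.
lra.
Qed.

Lemma sqfrob_eigencols_ge (R : realFieldType) T p (A Ah Q : 'M[R]_T) (X : 'M[R]_(T, p))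
    (d : 'rV[R]_p) c :
  Q^T = Q -> Q *m Q = Q -> Q *m A = 0 -> Ah *m X = X *m diag_mx d ->
  (forall j, col j X != 0 -> c <= d 0 j ^+ 2) ->
  c * sqfrob (Q *m X) <= sqfrob ((Ah - A) *m X).
Proof.
move=> QT QQ QA AhX cd; apply: le_trans (sqfrob_mulmx_diag_ge (d := d) _) _.
  move=> i j; have [Xj0|/cd cdj] := eqVneq (col j X) 0.
    have -> : (Q *m X) i j = (Q *m col j X) i 0 by rewrite -col_mulmx [RHS]mxE.
    by rewrite Xj0 mulmx0 mxE expr0n mulr0 mul0r expr0n.
  by rewrite exprMn mulrC ler_wpM2l ?sqr_ge0.
have QAh : Q *m Ah = Q *m (Ah - A) by rewrite mulmxBr QA subr0.
by rewrite -mulmxA -AhX mulmxA QAh -mulmxA sqfrob_proj_mulmx_le.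
Qed.

Section DavisKahan.
Variables (R : rcfType) (T K : nat) (A Ah : 'M[R]_T) (V Vh : 'M[R]_(T, K)).
Variables (lam lamh : 'rV[R]_K) (gamma : R) (Z : 'M[R]_T) (mu : 'rV[R]_T).
Hypotheses (AT : A^T = A) (AhT : Ah^T = Ah).
Hypotheses (VV : V^T *m V = 1%:M) (AV : A *m V = V *m diag_mx lam).
Hypothesis AQ : A *m proj_compl V = 0.
Hypotheses (gamma_gt0 : 0 < gamma) (gamma_le : forall k, gamma <= `|lam 0 k|).
Hypothesis topAh : top_abs_eigvecs Ah Vh lamh.
Hypotheses (ZZ : Z^T *m Z = 1%:M) (AhQZ : Ah *m proj_compl Vh *m Z = Z *m diag_mx mu).

Local Notation Qh := (proj_compl Vh).
Local Notation E := (Ah - A).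
Let W := Z^T *m Qh *m V.
Let S := [set i | gamma / 2 < `|mu 0 i|].
Let J : 'M[R]_T := coord_proj S.

Let VhVh : Vh^T *m Vh = 1%:M. Proof. by case: topAh. Qed.
Let AhVh : Ah *m Vh = Vh *m diag_mx lamh. Proof. by case: topAh. Qed.

Let ZtK : (Z^T)^T *m Z^T = 1%:M. Proof. by rewrite trmxK; apply: mulmx1C. Qed.

Lemma sqfrob_W : sqfrob W = sqfrob (Qh *m V).
Proof. by rewrite /W -mulmxA (sqfrob_orth_mulmx _ ZtK). Qed.

Lemma W_sylvester : Z^T *m Qh *m E *m V = diag_mx mu *m W - W *m diag_mx lam.
Proof.
have ZQAh : Z^T *m Qh *m Ah = diag_mx mu *m Z^T.
  by rewrite -[Ah]AhT -proj_compl_sym -!trmx_mul mulmxA AhQZ trmx_mul tr_diag_mx.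
have ZQAhQ : diag_mx mu *m Z^T *m Qh = diag_mx mu *m Z^T.
  rewrite -[in LHS]ZQAh -mulmxA (proj_compl_comm AhT AhVh) mulmxA.
  by rewrite -(mulmxA Z^T) proj_compl_idem // ZQAh.
by rewrite /W mulmxBr mulmxBl ZQAh -ZQAhQ -!mulmxA AV !mulmxA.
Qed.

Lemma sqfrob_W_small : gamma ^+ 2 / 4 * sqfrob ((1%:M - J) *m W) <= sqfrob E.
Proof.
have sqfrob_F : sqfrob (Z^T *m Qh *m E *m V) <= sqfrob E.
  rewrite -!mulmxA (sqfrob_orth_mulmx _ ZtK).
  rewrite (le_trans (sqfrob_proj_mulmx_le _ (proj_compl_sym Vh) (proj_compl_idem VhVh))) //.
  exact: sqfrob_mulmx_orth_le.
apply: le_trans sqfrob_F; rewrite W_sylvester /sqfrob mulr_sumr.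
apply: ler_sum => i _; rewrite mulr_sumr; apply: ler_sum => j _.
have -> : (diag_mx mu *m W - W *m diag_mx lam) i j = (mu 0 i - lam 0 j) * W i j.
  by rewrite mul_diag_mx mul_mx_diag !mxE; ring.
rewrite coord_projC_mulmxE.
case: ifP => [_|iS]; first by rewrite expr0n mulr0 sqr_ge0.
rewrite exprMn ler_wpM2r ?sqr_ge0 // sqr_gap //.
by move: iS; rewrite inE => /negbT; rewrite -leNgt.
Qed.

Lemma sqfrob_W_large : sqfrob (J *m W) <= #|S|%:R.
Proof.
rewrite /W !mulmxA (le_trans (sqfrob_mulmx_orth_le _ VV)) //.
rewrite (le_trans (sqfrob_mulmx_proj_le _ (proj_compl_sym Vh) (proj_compl_idem VhVh))) //.
rewrite sqfrob_trace trmx_mul trmxK coord_proj_sym -(mulmxA J) (mulmxA Z^T) ZZ mul1mx.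
by rewrite coord_proj_idem mxtrace_coord_proj.
Qed.

(* The columns of [Vh] and the [col i Z], [i \in S], are [K + #|S|] orthonormal
   eigenvectors of [Ah] with eigenvalues above [gamma / 2]; at least [#|S|]
   dimensions of their span lie in the kernel of [A], where only [E] acts. *)
Let mu_neq0 i : i \in S -> mu 0 i != 0.
Proof. by rewrite inE -normr_gt0; apply: le_lt_trans; rewrite divr_ge0 ?ltW. Qed.

Let AhQz i : Ah *m Qh *m col i Z = mu 0 i *: col i Z.
Proof. by rewrite -col_mulmx AhQZ col_mul_diag. Qed.

Let Y := Z *m J.

Let colY i : col i Y = if i \in S then col i Z else 0.
Proof. exact: col_coord_proj. Qed.

Let VhY : Vh^T *m Y = 0.
Proof.
apply: col_inj => i; rewrite col_mulmx colY col0.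
case: ifP => [iS|_]; last by rewrite mulmx0.
exact: (compl_eigvec AhT VhVh AhVh (mu_neq0 iS) (AhQz i)).1.
Qed.

Let AhY : Ah *m Y = Y *m diag_mx mu.
Proof.
apply: col_inj => i; rewrite col_mul_diag col_mulmx colY.
case: ifP => [iS|_]; last by rewrite mulmx0 scaler0.
exact: (compl_eigvec AhT VhVh AhVh (mu_neq0 iS) (AhQz i)).2.
Qed.

Let YY : Y^T *m Y = J.
Proof.
by rewrite trmx_mul coord_proj_sym -mulmxA (mulmxA Z^T) ZZ mul1mx coord_proj_idem.
Qed.

Let YYY : Y^T *m Y *m Y^T = Y^T.
Proof. by rewrite YY trmx_mul coord_proj_sym mulmxA coord_proj_idem. Qed.

Lemma card_large_eigs : gamma ^+ 2 / 4 * #|S|%:R <= sqfrob E.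
Proof.
have [S0|[i0 i0S]] := set_0Vmem S; first by rewrite S0 cards0 mulr0 sqfrob_ge0.
set c := gamma ^+ 2 / 4.
have sq_large x : gamma / 2 < `|x| -> c <= x ^+ 2.
  by move=> gx; apply: sqr_div4_le; rewrite ?ltW.
have lamh_large k : gamma / 2 < `|lamh 0 k|.
  have z0 : col i0 Z != 0 by rewrite -sqfrob_eq0 -mulmx_tr_diagE ZZ mxE eqxx oner_eq0.
  have := top_compl_eigval AhT topAh z0 (mu_neq0 i0S) (AhQz i0) k.
  by apply: lt_le_trans; move: i0S; rewrite inE.
have QA : proj_compl V *m A = 0.
  by rewrite -[A]AT -[proj_compl V]proj_compl_sym -trmx_mul AQ trmx0.
have lb_eigen p (X : 'M[R]_(T, p)) d : Ah *m X = X *m diag_mx d ->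
    (forall j, col j X != 0 -> c <= d 0 j ^+ 2) ->
    c * sqfrob (proj_compl V *m X) <= sqfrob (E *m X).
  exact: sqfrob_eigencols_ge (proj_compl_sym V) (proj_compl_idem VV) QA.
have lb_Vh := lb_eigen _ _ _ AhVh (fun j _ => sq_large _ (lamh_large j)).
have lb_Y : c * sqfrob (proj_compl V *m Y) <= sqfrob (E *m Y).
  apply: lb_eigen AhY _ => j; rewrite colY; case: ifP => [jS _|_]; last by rewrite eqxx.
  by apply: sq_large; move: jS; rewrite inE.
have := sqfrob_proj_compl_orthD_ge VV VhVh VhY YYY.
have := sqfrob_mulmx_orthD_le E VhVh VhY YYY.
rewrite [sqfrob Y]sqfrob_traceT YY mxtrace_coord_proj => sumE count.
have c_ge0 : 0 <= c by rewrite divr_ge0 ?sqr_ge0.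
have := ler_wpM2l c_ge0 count; lra.
Qed.

Lemma sin_theta_bound_spectral : gamma ^+ 2 * sqfrob (Qh *m V) <= 8 * sqfrob E.
Proof.
have small := sqfrob_W_small; have large := card_large_eigs.
have JW : gamma ^+ 2 / 4 * sqfrob (J *m W) <= gamma ^+ 2 / 4 * #|S|%:R.
  by rewrite ler_wpM2l ?divr_ge0 ?sqr_ge0 ?sqfrob_W_large.
rewrite -sqfrob_W (sqfrob_coord_split W S) -/J; lra.
Qed.

End DavisKahan.

Lemma sin_theta_bound (R : rcfType) T K (A Ah : 'M[R]_T) (V Vh : 'M[R]_(T, K))
    (lam lamh : 'rV[R]_K) (gamma : R) :
  A^T = A -> Ah^T = Ah -> V^T *m V = 1%:M -> A *m V = V *m diag_mx lam ->
  A *m proj_compl V = 0 -> 0 < gamma -> (forall k, gamma <= `|lam 0 k|) ->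
  top_abs_eigvecs Ah Vh lamh ->
  gamma ^+ 2 * sqfrob (proj_compl Vh *m V) <= 8 * sqfrob (Ah - A).
Proof.
move=> AT AhT VV AV AQ gamma_gt0 gamma_le topAh; have [_ AhVh _] := topAh.
have [Z [mu [ZZ AhQZ]]] := symmetric_diagonalization (proj_compl_mulmx_sym AhT AhVh).
exact: sin_theta_bound_spectral AT AhT VV AV AQ gamma_gt0 gamma_le topAh ZZ AhQZ.
Qed.

Unset Implicit Arguments.

Theorem theorem1 (R : rcfType) (n T K : nat)
  (P Ph : 'I_T -> 'M[R]_n)
  (V Vh : 'M[R]_(T, K)) (lam lamh : 'rV[R]_K) (gamma : R) :
  (0 < n)%N -> (0 < T)%N -> (0 < K)%N ->
  \rank (distmat P) = K ->
  top_abs_eigvecs (distmat P) V lam ->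
  top_abs_eigvecs (distmat Ph) Vh lamh ->
  (exists k : 'I_K, gamma = `|lam 0 k|) ->
  (forall k : 'I_K, gamma <= `|lam 0 k|) ->
  exists O : 'M[R]_K,
    O^T *m O = 1%:M /\
    frob (Vh *m O - V) ^+ 2
      <= 64 * T%:R / gamma ^+ 2 * \sum_(i < T) frob (Ph i - P i) ^+ 2.
Proof.
move=> _ _ _ rkD topD topDh [k0 gamma_k0] gamma_le.
have [DT DhT] := (distmat_sym P, distmat_sym Ph).
have [lam_neq0 DQ] := top_eigvecs_rank DT rkD topD.
have [[VV DV _] [VhVh _ _]] := (topD, topDh).
have gamma_gt0 : 0 < gamma by rewrite gamma_k0 normr_gt0.
have sin_theta := sin_theta_bound DT DhT VV DV DQ gamma_gt0 gamma_le topDh.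
have [O [OO align]] := orthonormal_frames_align VV VhVh.
exists O; split => //.
have noise := sqfrob_distmatB P Ph.
rewrite frob_sqr mulrAC ler_pdivlMr ?exprn_gt0 //.
have : sqfrob (Vh *m O - V) * gamma ^+ 2 <= 2 * sqfrob (proj_compl Vh *m V) * gamma ^+ 2.
  by rewrite ler_wpM2r ?sqr_ge0.
lra.
Qed.
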